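(* Assume (C1) and (C2). For any $u\in\mathcal{M}$, $$I(u)=\max_{s,t\ge0}I(su^++tu^-).$$
   Context: Fix real numbers $p,q,r$ with $1<p<q$, $\frac p2$ a positive integer, and $r\ge1$, and functions $a,b,c:\mathbb{Z}\to(0,+\infty)$. Conditions: - (C1) There is $b_0>0$ with $b(n)\ge b_0$ for all $n$ and $b(n)\to+\infty$ as $|n|\to\infty$. - (C2) There is $c_0>0$ with $c(n)\le c_0$ for all $n$ and $\sum_n c(n)<+\infty$. Notation for a real sequence $u=(u(n))_{n\in\mathbb{Z}}$: $\Delta u(n)=u(n+1)-u(n)$, $u^+(n)=\max\{u(n),0\}$, $u^-(n)=\min\{u(n),0\}$. Spaces: - $E$ is the set of real sequences $u$ with $\|u\|:=\big(\sum_n[a(n)|\Delta u(n)|^p+b(n)|u(n)|^p]\big)^{1/p}<\infty$. - $\mathcal{D}=\{u\in E:\sum_n c(n)|u(n)|^q\ln|u(n)|^r<+\infty\}$, where terms with $u(n)=0$ are read as $0$. For $u,v\in\mathcal{D}$: - $I(u)=\frac1p\|u\|^p+\frac{r}{q^2}\sum_n c(n)|u(n)|^q-\frac1q\sum_n c(n)|u(n)|^q\ln|u(n)|^r$. - $\langle I'(u),v\rangle=\sum_n[a(n)|\Delta u(n)|^{p-2}\Delta u(n)\Delta v(n)+b(n)|u(n)|^{p-2}u(n)v(n)]-\sum_n c(n)|u(n)|^{q-2}u(n)v(n)\ln|u(n)|^r$. $\mathcal{M}=\{u\in\mathcal{D}:u^+\ne0,\ u^-\neq0,\ \langle I'(u),u^+\rangle=0,\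 \langle I'(u),u^-\rangle=0\}$. *)

From Stdlib Require Import Reals Lra ZArith.
From Coquelicot Require Import Coquelicot.
Open Scope R_scope.

(* x ^ a for x >= 0 and real a, with the convention 0 ^ a = 0. *)
Definition rpow (x a : R) : R := if Req_EM_T x 0 then 0 else Rpower x a.

(* Summation over Z: split into n >= 0 and n <= -1. *)
Definition ex_sumZ (f : Z -> R) : Prop :=
  ex_series (fun n : nat => f (Z.of_nat n)) /\
  ex_series (fun n : nat => f (- Z.of_nat (S n))%Z).

Definition sumZ (f : Z -> R) : R :=
  Series (fun n : nat => f (Z.of_nat n)) +
  Series (fun n : nat => f (- Z.of_nat (S n))%Z).

Definition Delta (u : Z -> R) (n : Z) : R := u (n + 1)%Z - u n.
Definition posp (u : Z -> R) : Z -> R := fun n => Rmax (u n) 0.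
Definition negp (u : Z -> R) : Z -> R := fun n => Rmin (u n) 0.

(* ln |x|^r, read as 0 when x = 0 *)
Definition lnpow (x r : R) : R := if Req_EM_T x 0 then 0 else ln (Rpower (Rabs x) r).

Definition normp_term (p : R) (a b : Z -> R) (u : Z -> R) (n : Z) : R :=
  a n * rpow (Rabs (Delta u n)) p + b n * rpow (Rabs (u n)) p.

Definition normp (p : R) (a b : Z -> R) (u : Z -> R) : R := sumZ (normp_term p a b u).

Definition inE (p : R) (a b : Z -> R) (u : Z -> R) : Prop := ex_sumZ (normp_term p a b u).

Definition log_term (q r : R) (c : Z -> R) (u : Z -> R) (n : Z) : R :=
  c n * rpow (Rabs (u n)) q * lnpow (u n) r.

(* D: u in E with sum c|u|^q ln|u|^r finite (read as absolute convergence) *)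
Definition inD (p q r : R) (a b c : Z -> R) (u : Z -> R) : Prop :=
  inE p a b u /\ ex_sumZ (fun n => Rabs (log_term q r c u n)).

Definition Ifun (p q r : R) (a b c : Z -> R) (u : Z -> R) : R :=
  / p * normp p a b u
  + r / (q ^ 2) * sumZ (fun n => c n * rpow (Rabs (u n)) q)
  - / q * sumZ (log_term q r c u).

Definition dI (p q r : R) (a b c : Z -> R) (u v : Z -> R) : R :=
  sumZ (fun n => a n * rpow (Rabs (Delta u n)) (p - 2) * Delta u n * Delta v n
               + b n * rpow (Rabs (u n)) (p - 2) * u n * v n)
  - sumZ (fun n => c n * rpow (Rabs (u n)) (q - 2) * u n * v n * lnpow (u n) r).

Definition inM (p q r : R) (a b c : Z -> R) (u : Z -> R) : Prop :=
  inD p q r a b c u /\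
  posp u <> (fun _ => 0) /\ negp u <> (fun _ => 0) /\
  dI p q r a b c u (posp u) = 0 /\ dI p q r a b c u (negp u) = 0.

Definition condC1 (b : Z -> R) : Prop :=
  (exists b0, 0 < b0 /\ forall n, b0 <= b n) /\
  (forall M, exists N : Z, forall n, (N < Z.abs n)%Z -> M < b n).

Definition condC2 (c : Z -> R) : Prop :=
  (exists c0, 0 < c0 /\ forall n, c n <= c0) /\ ex_sumZ c.

From Stdlib Require Import Reals Lra Lia ZArith FunctionalExtensionality.
From Coquelicot Require Import Coquelicot.
Open Scope R_scope.

(** For [w = s u+ + t u-], compare [I w] with [I u] term by term. Since [u+] and [u-] are
    nondecreasing functions of [u], the increments [X = Delta u+] and [Y = Delta u-] have the
    same sign, and for even [p] convexity gives
    [|s X + t Y|^p <= |X + Y|^(p-2) (X + Y) (s^p X + t^p Y)];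
    hence [||w||^p <= s^p A+ + t^p A-], where [A+-] are the [||.||^p]-parts of [<I'(u), u+->].
    On the logarithmic part, [ln|s v|^r = r ln s + ln|v|^r] and [y - 1 <= y ln y] bound the
    change by [-(s^q - 1)/q] times the logarithmic part of [<I'(u), u+>], which is [A+] by the
    Nehari identity (and likewise for [t] and [u-]). Therefore
    [I w - I u <= ((s^p - 1)/p - (s^q - 1)/q) A+ + ((t^p - 1)/p - (t^q - 1)/q) A- <= 0],
    because [A+- >= 0] and [x |-> (s^x - 1)/x] is nondecreasing by convexity of [exp].
    Equality holds at [s = t = 1]. *)

Lemma ex_sumZ_le (f g : Z -> R) :
  (forall n, Rabs (f n) <= g n) -> ex_sumZ g -> ex_sumZ f.
Proof.
  intros Hfg [Hg1 Hg2]; split.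
  - exact (ex_series_le (K := R_AbsRing) (fun n : nat => f (Z.of_nat n)) _
      (fun n => Hfg _) Hg1).
  - exact (ex_series_le (K := R_AbsRing) (fun n : nat => f (- Z.of_nat (S n))%Z) _
      (fun n => Hfg _) Hg2).
Qed.

Lemma ex_sumZ_plus (f g : Z -> R) :
  ex_sumZ f -> ex_sumZ g -> ex_sumZ (fun n => f n + g n).
Proof.
  intros [Hf1 Hf2] [Hg1 Hg2]; split;
    [exact (ex_series_plus _ _ Hf1 Hg1) | exact (ex_series_plus _ _ Hf2 Hg2)].
Qed.

Lemma ex_sumZ_minus (f g : Z -> R) :
  ex_sumZ f -> ex_sumZ g -> ex_sumZ (fun n => f n - g n).
Proof.
  intros [Hf1 Hf2] [Hg1 Hg2]; split;
    [exact (ex_series_minus _ _ Hf1 Hg1) | exact (ex_series_minus _ _ Hf2 Hg2)].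
Qed.

Lemma ex_sumZ_scal (k : R) (f : Z -> R) : ex_sumZ f -> ex_sumZ (fun n => k * f n).
Proof.
  intros [Hf1 Hf2]; split; [exact (ex_series_scal_l k _ Hf1) | exact (ex_series_scal_l k _ Hf2)].
Qed.

#[local] Hint Resolve ex_sumZ_plus ex_sumZ_minus ex_sumZ_scal : sumZ.

Lemma sumZ_plus (f g : Z -> R) : ex_sumZ f -> ex_sumZ g ->
  sumZ (fun n => f n + g n) = sumZ f + sumZ g.
Proof. intros [Hf1 Hf2] [Hg1 Hg2]; unfold sumZ; rewrite !Series_plus by assumption; ring. Qed.

Lemma sumZ_minus (f g : Z -> R) : ex_sumZ f -> ex_sumZ g ->
  sumZ (fun n => f n - g n) = sumZ f - sumZ g.
Proof. intros [Hf1 Hf2] [Hg1 Hg2]; unfold sumZ; rewrite !Series_minus by assumption; ring. Qed.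

Lemma sumZ_scal (k : R) (f : Z -> R) : sumZ (fun n => k * f n) = k * sumZ f.
Proof. unfold sumZ; rewrite !Series_scal_l; ring. Qed.

Lemma Series_zero : Series (fun _ : nat => 0) = 0.
Proof.
  rewrite (Series_ext _ (fun _ => 0 * 0)) by (intros; ring).
  rewrite (Series_scal_l 0 (fun _ => 0)); ring.
Qed.

Lemma sumZ_ge0 (f : Z -> R) : (forall n, 0 <= f n) -> ex_sumZ f -> 0 <= sumZ f.
Proof.
  intros Hf [Hf1 Hf2]; unfold sumZ.
  assert (0 <= Series (fun n : nat => f (Z.of_nat n))).
  { rewrite <- Series_zero; apply Series_le; [intros; split; [lra | apply Hf] | easy]. }
  assert (0 <= Series (fun n : nat => f (- Z.of_nat (S n))%Z)).
  { rewrite <- Series_zero; apply Series_le; [intros; split; [lra | apply Hf] | easy]. }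
  lra.
Qed.

Lemma sumZ_le (f g : Z -> R) :
  (forall n, f n <= g n) -> ex_sumZ f -> ex_sumZ g -> sumZ f <= sumZ g.
Proof.
  intros Hfg Hf Hg.
  assert (H : 0 <= sumZ (fun n => g n - f n)).
  { apply sumZ_ge0; [intros n; specialize (Hfg n); lra | auto with sumZ]. }
  rewrite sumZ_minus in H by assumption; lra.
Qed.

Lemma sub_mul_pow_sub_ge0 (n : nat) (s t : R) :
  0 <= s -> 0 <= t -> 0 <= (s - t) * (s ^ n - t ^ n).
Proof.
  intros Hs Ht; destruct (Rle_dec s t).
  - assert (s ^ n <= t ^ n) by (apply pow_incr; lra); nra.
  - assert (t ^ n <= s ^ n) by (apply pow_incr; lra); nra.
Qed.

Lemma pow_convex_comb_le (n : nat) (x y s t : R) :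
  0 <= x -> 0 <= y -> 0 <= s -> 0 <= t ->
  (s * x + t * y) ^ S n <= (x + y) ^ n * (s ^ S n * x + t ^ S n * y).
Proof.
  intros Hx Hy Hs Ht; induction n as [|n IH]; [simpl; lra|].
  rewrite <- (tech_pow_Rmult (s * x + t * y)), <- (tech_pow_Rmult (x + y)),
    <- (tech_pow_Rmult s (S n)), <- (tech_pow_Rmult t (S n)).
  assert (Hcomb : 0 <= s * x + t * y) by nra.
  assert (Hpow : 0 <= (x + y) ^ n) by (apply pow_le; lra).
  assert (Hcheb := sub_mul_pow_sub_ge0 (S n) s t Hs Ht).
  apply Rle_trans with ((s * x + t * y) * ((x + y) ^ n * (s ^ S n * x + t ^ S n * y))).
  - apply Rmult_le_compat_l; assumption.
  - (* [(x+y)(s^(n+2) x + t^(n+2) y) - (s x + t y)(s^(n+1) x + t^(n+1) y)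
       = x y (s - t)(s^(n+1) - t^(n+1))] *)
    assert (0 <= (x + y) ^ n * (x * y * ((s - t) * (s ^ S n - t ^ S n)))).
    { apply Rmult_le_pos; [assumption|]. apply Rmult_le_pos; [nra | assumption]. }
    nra.
Qed.

Lemma pow_opp_even (j : nat) (x : R) : (- x) ^ (2 * j) = x ^ (2 * j).
Proof. rewrite !pow_sqr; f_equal; ring. Qed.

Lemma pow_opp_odd (j : nat) (x : R) : (- x) ^ (2 * j + 1) = - x ^ (2 * j + 1).
Proof. rewrite Nat.add_1_r, <- !tech_pow_Rmult, pow_opp_even; ring. Qed.

Lemma pow_convex_comb_le_same_sign (j : nat) (X Y s t : R) :
  0 <= s -> 0 <= t -> 0 <= X * Y ->
  (s * X + t * Y) ^ (2 * j + 2)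
  <= (X + Y) ^ (2 * j + 1) * (s ^ (2 * j + 2) * X + t ^ (2 * j + 2) * Y).
Proof.
  intros Hs Ht HXY.
  replace (2 * j + 2)%nat with (S (2 * j + 1)) by lia.
  destruct (Rle_dec 0 (X + Y)).
  - apply pow_convex_comb_le; nra.
  - pose proof (pow_convex_comb_le (2 * j + 1) (- X) (- Y) s t) as H.
    replace (S (2 * j + 1)) with (2 * (j + 1))%nat in H |- * by lia.
    replace (s * - X + t * - Y) with (- (s * X + t * Y)) in H by ring.
    replace (- X + - Y) with (- (X + Y)) in H by ring.
    rewrite pow_opp_even, pow_opp_odd in H.
    eapply Rle_trans; [apply H; nra | right; ring].
Qed.

Lemma exp_ge_tangent (m x : R) : exp m * (1 + (x - m)) <= exp x.
Proof.
  replace (exp x) with (exp m * exp (x - m)) by (rewrite <- exp_plus; f_equal; ring).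
  apply Rmult_le_compat_l; [left; apply exp_pos | apply exp_ineq1_le].
Qed.

Lemma exp_convex (th x y : R) : 0 <= th <= 1 ->
  exp (th * x + (1 - th) * y) <= th * exp x + (1 - th) * exp y.
Proof.
  intros Hth; set (m := th * x + (1 - th) * y).
  pose proof (exp_ge_tangent m x) as Hx; pose proof (exp_ge_tangent m y) as Hy.
  apply Rmult_le_compat_l with (r := th) in Hx; [|lra].
  apply Rmult_le_compat_l with (r := 1 - th) in Hy; [|lra].
  assert (exp m = th * (exp m * (1 + (x - m))) + (1 - th) * (exp m * (1 + (y - m))))
    by (unfold m; ring).
  lra.
Qed.

Lemma rpow_0_l (a : R) : rpow 0 a = 0.
Proof. unfold rpow; destruct (Req_EM_T 0 0); lra. Qed.

Lemma rpow_Rpower (x a : R) : 0 < x -> rpow x a = Rpower x a.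
Proof. intros Hx; unfold rpow; destruct (Req_EM_T x 0); [lra | reflexivity]. Qed.

Lemma rpow_ge0 (x a : R) : 0 <= rpow x a.
Proof. unfold rpow; destruct (Req_EM_T x 0); [lra | left; apply exp_pos]. Qed.

Lemma rpow_INR (x : R) (n : nat) : 0 <= x -> (0 < n)%nat -> rpow x (INR n) = x ^ n.
Proof.
  intros Hx Hn; destruct (Req_EM_T x 0) as [->|Hx0].
  - rewrite rpow_0_l, pow_i by lia; reflexivity.
  - rewrite rpow_Rpower, Rpower_pow by lra; reflexivity.
Qed.

Lemma rpow_abs_sub2_mul_self (x a : R) : rpow (Rabs x) (a - 2) * x * x = rpow (Rabs x) a.
Proof.
  destruct (Req_EM_T x 0) as [->|Hx].
  - rewrite Rabs_R0, !rpow_0_l; ring.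
  - assert (Hax : 0 < Rabs x) by (apply Rabs_pos_lt; assumption).
    rewrite !rpow_Rpower by assumption.
    replace a with ((a - 2) + INR 2) at 2 by (simpl; ring).
    rewrite Rpower_plus, Rpower_pow, pow2_abs by assumption; ring.
Qed.

Lemma rpow_abs_even (j : nat) (x : R) : rpow (Rabs x) (INR (2 * j + 2)) = x ^ (2 * j + 2).
Proof.
  rewrite rpow_INR by (apply Rabs_pos || lia).
  replace (2 * j + 2)%nat with (2 * (j + 1))%nat by lia.
  rewrite !pow_mult, pow2_abs; reflexivity.
Qed.

Lemma rpow_abs_odd (j : nat) (x : R) :
  rpow (Rabs x) (INR (2 * j + 2) - 2) * x = x ^ (2 * j + 1).
Proof.
  replace (INR (2 * j + 2) - 2) with (INR (2 * j)) by (rewrite !plus_INR; simpl; ring).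
  destruct (Req_EM_T x 0) as [->|Hx].
  - rewrite pow_i by lia; ring.
  - rewrite rpow_Rpower, Rpower_pow by (apply Rabs_pos_lt; assumption).
    rewrite pow_add, !pow_mult, pow2_abs; ring.
Qed.

Lemma rpow_convex_comb_le (p : R) (j : nat) (X Y s t : R) :
  p = INR (2 * j + 2) -> 0 <= s -> 0 <= t -> 0 <= X * Y ->
  rpow (Rabs (s * X + t * Y)) p
  <= rpow s p * (rpow (Rabs (X + Y)) (p - 2) * (X + Y) * X)
     + rpow t p * (rpow (Rabs (X + Y)) (p - 2) * (X + Y) * Y).
Proof.
  intros -> Hs Ht HXY.
  rewrite rpow_abs_even, rpow_abs_odd, !rpow_INR by (assumption || lia).
  pose proof (pow_convex_comb_le_same_sign j X Y s t Hs Ht HXY); lra.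
Qed.

Lemma rpow_sub1_div_le (p q s : R) : 0 < p -> p < q -> 0 <= s ->
  (rpow s p - 1) / p <= (rpow s q - 1) / q.
Proof.
  intros Hp Hpq [Hs | <-].
  - rewrite !rpow_Rpower by lra; unfold Rpower.
    assert (Hc := exp_convex (p / q) (q * ln s) 0).
    replace (p / q * (q * ln s) + (1 - p / q) * 0) with (p * ln s) in Hc by (field; lra).
    rewrite exp_0 in Hc.
    assert (Hpq' : 0 <= p / q <= 1).
    { split; [apply Rlt_le, Rdiv_lt_0_compat | apply (Rdiv_le_1 p q)]; lra. }
    specialize (Hc Hpq').
    apply Rle_trans with (p / q * (exp (q * ln s) - 1) / p).
    - apply Rmult_le_compat_r; [left; apply Rinv_0_lt_compat|]; lra.
    - right; field; lra.
  - rewrite !rpow_0_l; unfold Rdiv.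
    assert (/ q < / p) by (apply Rinv_lt_contravar; [apply Rmult_lt_0_compat |]; lra).
    lra.
Qed.

Lemma rpow_sub1_le_mul_ln (q s : R) : 0 <= s -> rpow s q - 1 <= rpow s q * (q * ln s).
Proof.
  intros [Hs | <-]; [|rewrite rpow_0_l; lra].
  rewrite rpow_Rpower by assumption; unfold Rpower.
  pose proof (exp_ge_tangent (q * ln s) 0) as H; rewrite exp_0 in H; lra.
Qed.

Lemma lnpow_neq0 (x r : R) : x <> 0 -> lnpow x r = r * ln (Rabs x).
Proof. intros Hx; unfold lnpow; destruct (Req_EM_T x 0); [contradiction | apply ln_Rpower]. Qed.

Lemma rpow_abs_scale (q s x : R) : 0 <= s ->
  rpow (Rabs (s * x)) q = rpow s q * rpow (Rabs x) q.
Proof.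
  intros [Hs | <-]; [|rewrite Rmult_0_l, Rabs_R0, !rpow_0_l; ring].
  destruct (Req_EM_T x 0) as [->|Hx]; [rewrite Rmult_0_r, Rabs_R0, !rpow_0_l; ring|].
  assert (0 < Rabs x) by (apply Rabs_pos_lt; assumption).
  rewrite Rabs_mult, (Rabs_pos_eq s), !rpow_Rpower, Rpower_mult_distr by nra.
  reflexivity.
Qed.

Lemma rpow_lnpow_scale (q r s x : R) : 0 <= s ->
  rpow (Rabs (s * x)) q * lnpow (s * x) r
  = rpow s q * (rpow (Rabs x) q * (r * ln s + lnpow x r)).
Proof.
  intros Hs; rewrite rpow_abs_scale by assumption.
  destruct Hs as [Hs | <-]; [|rewrite rpow_0_l; ring].
  destruct (Req_EM_T x 0) as [->|Hx]; [rewrite Rabs_R0, rpow_0_l; ring|].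
  assert (s * x <> 0) by (apply Rmult_integral_contrapositive_currified; lra).
  assert (0 < Rabs x) by (apply Rabs_pos_lt; assumption).
  rewrite !lnpow_neq0, Rabs_mult, (Rabs_pos_eq s), ln_mult by (assumption || lra).
  ring.
Qed.

Lemma rpow_le_abs_mul_lnpow (q r x : R) : 0 < q -> 0 < r ->
  rpow (Rabs x) q <= Rabs (rpow (Rabs x) q * lnpow x r) + exp (q / r).
Proof.
  intros Hq Hr; pose proof (exp_pos (q / r)).
  destruct (Req_EM_T x 0) as [->|Hx]; [rewrite Rabs_R0, rpow_0_l, Rmult_0_l, Rabs_R0; lra|].
  assert (Hax : 0 < Rabs x) by (apply Rabs_pos_lt; assumption).
  rewrite lnpow_neq0, rpow_Rpower by assumption.
  assert (HV : 0 < Rpower (Rabs x) q) by apply exp_pos.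
  destruct (Rle_dec 1 (r * ln (Rabs x))).
  - assert (Rpower (Rabs x) q * 1 <= Rpower (Rabs x) q * (r * ln (Rabs x)))
      by (apply Rmult_le_compat_l; lra).
    rewrite (Rabs_pos_eq (_ * (r * _))) by lra; lra.
  - assert (ln (Rabs x) < / r).
    { apply (Rmult_lt_reg_l r); [assumption|]. rewrite Rinv_r; lra. }
    assert (Rpower (Rabs x) q <= exp (q / r)).
    { left; apply exp_increasing; unfold Rdiv; nra. }
    pose proof (Rabs_pos (Rpower (Rabs x) q * (r * ln (Rabs x)))); lra.
Qed.

Lemma log_integrand_scale_le (q r k s x : R) : 0 < q -> 0 < r -> 0 <= k -> 0 <= s ->
  r / q ^ 2 * (k * rpow (Rabs (s * x)) q)
    - / q * (k * rpow (Rabs (s * x)) q * lnpow (s * x) r)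
  <= r / q ^ 2 * (k * rpow (Rabs x) q) - / q * (k * rpow (Rabs x) q * lnpow x r)
     - (rpow s q - 1) / q * (k * rpow (Rabs x) q * lnpow x r).
Proof.
  intros Hq Hr Hk Hs.
  rewrite Rmult_assoc, rpow_lnpow_scale, rpow_abs_scale by assumption.
  pose proof (rpow_sub1_le_mul_ln q s Hs) as Hln.
  set (S := rpow s q) in *; set (V := k * rpow (Rabs x) q).
  assert (HV : 0 <= V) by (apply Rmult_le_pos; [assumption | apply rpow_ge0]).
  assert (0 <= r / q ^ 2 * V * (S * (q * ln s) - (S - 1))).
  { apply Rmult_le_pos; [apply Rmult_le_pos; [apply Rlt_le, Rdiv_lt_0_compat|]|]; nra. }
  apply Rminus_le.
  match goal with |- ?d <= 0 =>
    replace d with (- (r / q ^ 2 * V * (S * (q * ln s) - (S - 1)))) by (unfold V; field; lra)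
  end.
  lra.
Qed.

Lemma abs_log_term_scale_le (q r k s x : R) : 0 <= k -> 0 <= s ->
  Rabs (k * rpow (Rabs (s * x)) q * lnpow (s * x) r)
  <= rpow s q * Rabs (r * ln s) * (k * rpow (Rabs x) q)
     + rpow s q * Rabs (k * rpow (Rabs x) q * lnpow x r).
Proof.
  intros Hk Hs.
  rewrite Rmult_assoc, rpow_lnpow_scale by assumption.
  assert (HS : 0 <= rpow s q) by apply rpow_ge0.
  assert (HV : 0 <= k * rpow (Rabs x) q) by (apply Rmult_le_pos; [assumption | apply rpow_ge0]).
  replace (k * (rpow s q * (rpow (Rabs x) q * (r * ln s + lnpow x r))))
    with (rpow s q * (k * rpow (Rabs x) q) * (r * ln s)
          + rpow s q * (k * rpow (Rabs x) q * lnpow x r)) by ring.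
  eapply Rle_trans; [apply Rabs_triang|].
  set (S := rpow s q) in *; set (V := k * rpow (Rabs x) q) in *.
  rewrite (Rabs_mult (S * V)), (Rabs_mult S (V * lnpow x r)),
    (Rabs_pos_eq (S * V)), (Rabs_pos_eq S) by (assumption || nra).
  right; ring.
Qed.

Definition mix (s t : R) (u : Z -> R) : Z -> R := fun n => s * posp u n + t * negp u n.

Definition dnorm_term (p : R) (a b u v : Z -> R) (n : Z) : R :=
  a n * rpow (Rabs (Delta u n)) (p - 2) * Delta u n * Delta v n
  + b n * rpow (Rabs (u n)) (p - 2) * u n * v n.

Definition dlog_term (q r : R) (c u v : Z -> R) (n : Z) : R :=
  c n * rpow (Rabs (u n)) (q - 2) * u n * v n * lnpow (u n) r.

Definition log_part (q r : R) (c v : Z -> R) : R :=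
  r / q ^ 2 * sumZ (fun n => c n * rpow (Rabs (v n)) q) - / q * sumZ (log_term q r c v).

Lemma Ifun_split (p q r : R) (a b c v : Z -> R) :
  Ifun p q r a b c v = / p * normp p a b v + log_part q r c v.
Proof. unfold Ifun, log_part; ring. Qed.

Lemma dI_split (p q r : R) (a b c u v : Z -> R) :
  dI p q r a b c u v = sumZ (dnorm_term p a b u v) - sumZ (dlog_term q r c u v).
Proof. reflexivity. Qed.

Lemma posp_add_negp (u : Z -> R) (n : Z) : posp u n + negp u n = u n.
Proof. unfold posp, negp, Rmax, Rmin; destruct (Rle_dec (u n) 0); lra. Qed.

Lemma posp_negp_cases (u : Z -> R) (n : Z) :
  (posp u n = u n /\ negp u n = 0) \/ (posp u n = 0 /\ negp u n = u n).
Proof. unfold posp, negp, Rmax, Rmin; destruct (Rle_dec (u n) 0), (Rle_dec 0 (u n)); lra. Qed.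

Lemma posp_mul_negp_ge0 (u : Z -> R) (n : Z) : 0 <= posp u n * negp u n.
Proof. destruct (posp_negp_cases u n) as [[-> ->] | [-> ->]]; lra. Qed.

Lemma Delta_posp_add_negp (u : Z -> R) (n : Z) :
  Delta (posp u) n + Delta (negp u) n = Delta u n.
Proof. unfold Delta; rewrite <- (posp_add_negp u n), <- (posp_add_negp u (n + 1)); ring. Qed.

Lemma Delta_posp_mul_negp_ge0 (u : Z -> R) (n : Z) :
  0 <= Delta (posp u) n * Delta (negp u) n.
Proof.
  unfold Delta, posp, negp, Rmax, Rmin.
  destruct (Rle_dec (u (n + 1)%Z) 0), (Rle_dec (u n) 0); nra.
Qed.

Lemma Delta_mix (s t : R) (u : Z -> R) (n : Z) :
  Delta (mix s t u) n = s * Delta (posp u) n + t * Delta (negp u) n.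
Proof. unfold Delta, mix; ring. Qed.

Lemma mix_1_1 (u : Z -> R) : mix 1 1 u = u.
Proof.
  apply functional_extensionality; intros n; unfold mix; rewrite <- (posp_add_negp u n); ring.
Qed.

Lemma rpow_sub2_same_sign_ge0 (p X Y : R) : 0 <= X * Y ->
  0 <= rpow (Rabs (X + Y)) (p - 2) * (X + Y) * X
  /\ 0 <= rpow (Rabs (X + Y)) (p - 2) * (X + Y) * Y.
Proof.
  intros HXY; pose proof (rpow_ge0 (Rabs (X + Y)) (p - 2)).
  rewrite !Rmult_assoc; split; apply Rmult_le_pos; nra.
Qed.

Section NormPart.

Variables (p : R) (a b : Z -> R).
Hypotheses (Ha : forall n, 0 <= a n) (Hb : forall n, 0 <= b n).

Lemma normp_term_ge0 (v : Z -> R) (n : Z) : 0 <= normp_term p a b v n.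
Proof.
  unfold normp_term; pose proof (Ha n); pose proof (Hb n).
  pose proof (rpow_ge0 (Rabs (Delta v n)) p); pose proof (rpow_ge0 (Rabs (v n)) p); nra.
Qed.

Lemma normp_term_eq_dnorm (u : Z -> R) (n : Z) :
  normp_term p a b u n = dnorm_term p a b u (posp u) n + dnorm_term p a b u (negp u) n.
Proof.
  unfold normp_term, dnorm_term.
  rewrite <- (rpow_abs_sub2_mul_self (Delta u n) p), <- (rpow_abs_sub2_mul_self (u n) p).
  rewrite <- (Delta_posp_add_negp u n) at 3; rewrite <- (posp_add_negp u n) at 3; ring.
Qed.

Lemma dnorm_term_posp_negp_ge0 (u : Z -> R) (n : Z) :
  0 <= dnorm_term p a b u (posp u) n /\ 0 <= dnorm_term p a b u (negp u) n.
Proof.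
  unfold dnorm_term; rewrite <- (Delta_posp_add_negp u n), <- (posp_add_negp u n).
  destruct (rpow_sub2_same_sign_ge0 p _ _ (Delta_posp_mul_negp_ge0 u n)) as [HD1 HD2].
  destruct (rpow_sub2_same_sign_ge0 p _ _ (posp_mul_negp_ge0 u n)) as [Hu1 Hu2].
  pose proof (Ha n); pose proof (Hb n).
  rewrite !(Rmult_assoc (a n)), !(Rmult_assoc (b n)); split;
    apply Rplus_le_le_0_compat; apply Rmult_le_pos; assumption.
Qed.

Lemma normp_term_mix_le (j : nat) (s t : R) (u : Z -> R) (n : Z) :
  p = INR (2 * j + 2) -> 0 <= s -> 0 <= t ->
  normp_term p a b (mix s t u) n
  <= rpow s p * dnorm_term p a b u (posp u) n + rpow t p * dnorm_term p a b u (negp u) n.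
Proof.
  intros Hp Hs Ht; unfold normp_term, dnorm_term.
  rewrite Delta_mix, <- (Delta_posp_add_negp u n); unfold mix.
  rewrite <- (posp_add_negp u n).
  pose proof (rpow_convex_comb_le p j _ _ s t Hp Hs Ht (Delta_posp_mul_negp_ge0 u n)) as HD.
  pose proof (rpow_convex_comb_le p j _ _ s t Hp Hs Ht (posp_mul_negp_ge0 u n)) as Hu.
  apply Rmult_le_compat_l with (r := a n) in HD; [|apply Ha].
  apply Rmult_le_compat_l with (r := b n) in Hu; [|apply Hb].
  lra.
Qed.

Lemma normp_eq_sum_dnorm (u : Z -> R) : inE p a b u ->
  ex_sumZ (dnorm_term p a b u (posp u)) /\ ex_sumZ (dnorm_term p a b u (negp u))
  /\ normp p a b u = sumZ (dnorm_term p a b u (posp u)) + sumZ (dnorm_term p a b u (negp u)).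
Proof.
  intros HE.
  assert (Hbound : forall n, Rabs (dnorm_term p a b u (posp u) n) <= normp_term p a b u n
                          /\ Rabs (dnorm_term p a b u (negp u) n) <= normp_term p a b u n).
  { intros n; destruct (dnorm_term_posp_negp_ge0 u n).
    rewrite normp_term_eq_dnorm, !Rabs_pos_eq by assumption; lra. }
  pose proof (ex_sumZ_le _ _ (fun n => proj1 (Hbound n)) HE) as Hpos.
  pose proof (ex_sumZ_le _ _ (fun n => proj2 (Hbound n)) HE) as Hneg.
  split; [assumption | split; [assumption|]].
  unfold normp; rewrite <- sumZ_plus by assumption.
  unfold sumZ; f_equal; apply Series_ext; intros; apply normp_term_eq_dnorm.
Qed.

Lemma normp_mix_le (j : nat) (s t : R) (u : Z -> R) :
  p = INR (2 * j + 2) -> 0 <= s -> 0 <= t -> inE p a b u ->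
  normp p a b (mix s t u)
  <= rpow s p * sumZ (dnorm_term p a b u (posp u)) + rpow t p * sumZ (dnorm_term p a b u (negp u)).
Proof.
  intros Hp Hs Ht HE; destruct (normp_eq_sum_dnorm u HE) as [Hpos [Hneg _]].
  assert (Hbound : forall n, Rabs (normp_term p a b (mix s t u) n)
    <= rpow s p * dnorm_term p a b u (posp u) n + rpow t p * dnorm_term p a b u (negp u) n).
  { intros n; rewrite Rabs_pos_eq by apply normp_term_ge0.
    apply (normp_term_mix_le j); assumption. }
  rewrite <- !sumZ_scal, <- sumZ_plus by auto with sumZ.
  apply sumZ_le; [intros n; eapply Rle_trans; [apply Rle_abs | apply Hbound] | | auto with sumZ].
  apply (ex_sumZ_le _ _ Hbound); auto with sumZ.
Qed.

End NormPart.

Section LogPart.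

Variables (q r : R) (c : Z -> R).
Hypotheses (Hq : 0 < q) (Hr : 0 < r) (Hc : forall n, 0 <= c n) (Hcs : ex_sumZ c).

Lemma dlog_term_eq (u v : Z -> R) (n : Z) :
  v n = u n -> dlog_term q r c u v n = log_term q r c u n.
Proof.
  intros Hv; unfold dlog_term, log_term.
  rewrite Hv, <- (rpow_abs_sub2_mul_self (u n) q); ring.
Qed.

Lemma dlog_term_zero (u v : Z -> R) (n : Z) : v n = 0 -> dlog_term q r c u v n = 0.
Proof. intros Hv; unfold dlog_term; rewrite Hv; ring. Qed.

Lemma abs_dlog_term_le (u v : Z -> R) (n : Z) : v n = u n \/ v n = 0 ->
  Rabs (dlog_term q r c u v n) <= Rabs (log_term q r c u n).
Proof.
  intros [Hv | Hv]; [rewrite dlog_term_eq by assumption; lra|].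
  rewrite dlog_term_zero, Rabs_R0 by assumption; apply Rabs_pos.
Qed.

Lemma rpow_term_le (v : Z -> R) (n : Z) :
  c n * rpow (Rabs (v n)) q <= Rabs (log_term q r c v n) + exp (q / r) * c n.
Proof.
  unfold log_term; rewrite Rmult_assoc, Rabs_mult, (Rabs_pos_eq (c n)) by apply Hc.
  pose proof (rpow_le_abs_mul_lnpow q r (v n) Hq Hr) as Hv.
  apply Rmult_le_compat_l with (r := c n) in Hv; [lra | apply Hc].
Qed.

Lemma log_integrand_mix_le (s t : R) (u : Z -> R) (n : Z) : 0 <= s -> 0 <= t ->
  r / q ^ 2 * (c n * rpow (Rabs (mix s t u n)) q) - / q * log_term q r c (mix s t u) n
  <= r / q ^ 2 * (c n * rpow (Rabs (u n)) q) - / q * log_term q r c u n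
     - (rpow s q - 1) / q * dlog_term q r c u (posp u) n
     - (rpow t q - 1) / q * dlog_term q r c u (negp u) n.
Proof.
  intros Hs Ht; unfold log_term at 1; unfold mix.
  destruct (posp_negp_cases u n) as [[Hp Hn] | [Hp Hn]].
  - rewrite (dlog_term_eq u (posp u)), (dlog_term_zero u (negp u)), Hp, Hn by assumption.
    rewrite Rmult_0_r, Rplus_0_r.
    pose proof (log_integrand_scale_le q r (c n) s (u n) Hq Hr (Hc n) Hs).
    unfold log_term; lra.
  - rewrite (dlog_term_zero u (posp u)), (dlog_term_eq u (negp u)), Hp, Hn by assumption.
    rewrite Rmult_0_r, Rplus_0_l.
    pose proof (log_integrand_scale_le q r (c n) t (u n) Hq Hr (Hc n) Ht).
    unfold log_term; lra.
Qed.

Lemma abs_log_term_mix_le (s t : R) (u : Z -> R) (n : Z) : 0 <= s -> 0 <= t ->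
  Rabs (log_term q r c (mix s t u) n)
  <= (rpow s q * Rabs (r * ln s) + rpow t q * Rabs (r * ln t)) * (c n * rpow (Rabs (u n)) q)
     + (rpow s q + rpow t q) * Rabs (log_term q r c u n).
Proof.
  intros Hs Ht.
  assert (Hnonneg : 0 <= rpow s q * Rabs (r * ln s) * (c n * rpow (Rabs (u n)) q)
          /\ 0 <= rpow t q * Rabs (r * ln t) * (c n * rpow (Rabs (u n)) q)
          /\ 0 <= rpow s q * Rabs (log_term q r c u n)
          /\ 0 <= rpow t q * Rabs (log_term q r c u n)).
  { pose proof (Hc n); pose proof (rpow_ge0 s q); pose proof (rpow_ge0 t q).
    pose proof (rpow_ge0 (Rabs (u n)) q); pose proof (Rabs_pos (r * ln s)).
    pose proof (Rabs_pos (r * ln t)); pose proof (Rabs_pos (log_term q r c u n)).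
    repeat split; repeat apply Rmult_le_pos; assumption. }
  unfold log_term in *; unfold mix.
  destruct (posp_negp_cases u n) as [[-> ->] | [-> ->]].
  - rewrite Rmult_0_r, Rplus_0_r.
    pose proof (abs_log_term_scale_le q r (c n) s (u n) (Hc n) Hs); lra.
  - rewrite Rmult_0_r, Rplus_0_l.
    pose proof (abs_log_term_scale_le q r (c n) t (u n) (Hc n) Ht); lra.
Qed.

Lemma ex_sumZ_rpow_term (v : Z -> R) : ex_sumZ (fun n => Rabs (log_term q r c v n)) ->
  ex_sumZ (fun n => c n * rpow (Rabs (v n)) q).
Proof.
  intros Hv.
  apply (ex_sumZ_le _ (fun n => Rabs (log_term q r c v n) + exp (q / r) * c n));
    [|auto with sumZ].
  intros n; rewrite Rabs_pos_eq by (apply Rmult_le_pos; [apply Hc | apply rpow_ge0]).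
  apply rpow_term_le.
Qed.

Lemma log_part_mix_le (s t : R) (u : Z -> R) : 0 <= s -> 0 <= t ->
  ex_sumZ (fun n => Rabs (log_term q r c u n)) ->
  log_part q r c (mix s t u)
  <= log_part q r c u - (rpow s q - 1) / q * sumZ (dlog_term q r c u (posp u))
     - (rpow t q - 1) / q * sumZ (dlog_term q r c u (negp u)).
Proof.
  intros Hs Ht Habs.
  assert (Habs_mix : ex_sumZ (fun n => Rabs (log_term q r c (mix s t u) n))).
  { eapply ex_sumZ_le;
      [intros n; rewrite Rabs_Rabsolu; apply (abs_log_term_mix_le s t u n Hs Ht)|].
    pose proof (ex_sumZ_rpow_term u Habs); auto with sumZ. }
  assert (Hconv : forall v, ex_sumZ (fun n => Rabs (log_term q r c v n)) ->
            ex_sumZ (log_term q r c v))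
    by (intros v; apply ex_sumZ_le; intros n; apply Rle_refl).
  pose proof (ex_sumZ_rpow_term u Habs) as Hrpow.
  pose proof (ex_sumZ_rpow_term _ Habs_mix) as Hrpow_mix.
  pose proof (Hconv u Habs) as Hlog; pose proof (Hconv _ Habs_mix) as Hlog_mix.
  assert (Hdlog : ex_sumZ (dlog_term q r c u (posp u)) /\ ex_sumZ (dlog_term q r c u (negp u))).
  { split; (eapply ex_sumZ_le; [intros n; apply abs_dlog_term_le | exact Habs]);
      destruct (posp_negp_cases u n) as [[Hp Hn] | [Hp Hn]]; tauto. }
  destruct Hdlog as [Hdlog_pos Hdlog_neg].
  pose proof (sumZ_le _ _ (fun n => log_integrand_mix_le s t u n Hs Ht)) as Hle.
  rewrite !sumZ_minus, !sumZ_scal in Hle by auto with sumZ.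
  unfold log_part; apply Hle; auto with sumZ.
Qed.

End LogPart.

Lemma Ifun_mix_le (p q r : R) (j : nat) (a b c u : Z -> R) (s t : R) :
  0 < p -> p < q -> p = INR (2 * j + 2) -> 0 < r ->
  (forall n, 0 <= a n) -> (forall n, 0 <= b n) -> (forall n, 0 <= c n) -> ex_sumZ c ->
  inD p q r a b c u -> dI p q r a b c u (posp u) = 0 -> dI p q r a b c u (negp u) = 0 ->
  0 <= s -> 0 <= t ->
  Ifun p q r a b c (mix s t u) <= Ifun p q r a b c u.
Proof.
  intros Hp Hpq Hp_even Hr Ha Hb Hc Hcs [HE Habs] Hnehari_pos Hnehari_neg Hs Ht.
  rewrite dI_split in Hnehari_pos, Hnehari_neg; rewrite !Ifun_split.
  destruct (normp_eq_sum_dnorm p a b Ha Hb u HE) as [Hpos [Hneg ->]].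
  pose proof (normp_mix_le p a b Ha Hb j s t u Hp_even Hs Ht HE) as Hnorm.
  pose proof (log_part_mix_le q r c ltac:(lra) Hr Hc Hcs s t u Hs Ht Habs) as Hlog.
  set (Apos := sumZ (dnorm_term p a b u (posp u))) in *.
  set (Aneg := sumZ (dnorm_term p a b u (negp u))) in *.
  assert (HApos : 0 <= Apos)
    by (apply sumZ_ge0; [intros n; apply (dnorm_term_posp_negp_ge0 p a b Ha Hb) | assumption]).
  assert (HAneg : 0 <= Aneg)
    by (apply sumZ_ge0; [intros n; apply (dnorm_term_posp_negp_ge0 p a b Ha Hb) | assumption]).
  (* with the Nehari identities these two products bound [I w - I u] *)
  assert (Hs_gain : ((rpow s p - 1) / p - (rpow s q - 1) / q) * Apos <= 0).
  { apply Rmult_le_0_r; [pose proof (rpow_sub1_div_le p q s Hp Hpq Hs); lra | assumption]. }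
  assert (Ht_gain : ((rpow t p - 1) / p - (rpow t q - 1) / q) * Aneg <= 0).
  { apply Rmult_le_0_r; [pose proof (rpow_sub1_div_le p q t Hp Hpq Ht); lra | assumption]. }
  apply Rmult_le_compat_l with (r := / p) in Hnorm; [|left; apply Rinv_0_lt_compat, Hp].
  unfold Rdiv in *; nra.
Qed.

Theorem corollary2p4 (p q r : R) (a b c : Z -> R)
  (Hp : 1 < p) (Hpq : p < q) (Hp2 : exists k : nat, (0 < k)%nat /\ p / 2 = INR k)
  (Hr : 1 <= r)
  (Ha : forall n, 0 < a n) (Hb : forall n, 0 < b n) (Hc : forall n, 0 < c n)
  (HC1 : condC1 b) (HC2 : condC2 c) (u : Z -> R) (Hu : inM p q r a b c u) :
  (forall s t : R, 0 <= s -> 0 <= t ->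
     Ifun p q r a b c (fun n => s * posp u n + t * negp u n) <= Ifun p q r a b c u) /\
  (exists s t : R, 0 <= s /\ 0 <= t /\
     Ifun p q r a b c (fun n => s * posp u n + t * negp u n) = Ifun p q r a b c u).
Proof.
  destruct Hp2 as [k [Hk Hk2]].
  assert (Hp_even : p = INR (2 * (k - 1) + 2)).
  { replace (2 * (k - 1) + 2)%nat with (2 * k)%nat by lia.
    rewrite mult_INR, <- Hk2; simpl; field. }
  destruct HC2 as [_ Hcs]; destruct Hu as [HuD [_ [_ [Hnehari_pos Hnehari_neg]]]].
  split.
  - intros s t Hs Ht.
    apply (Ifun_mix_le p q r (k - 1)); try assumption; try lra;
      intros n; [apply Rlt_le, Ha | apply Rlt_le, Hb | apply Rlt_le, Hc].
  - exists 1, 1; split; [lra | split; [lra |]].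
    change (Ifun p q r a b c (mix 1 1 u) = Ifun p q r a b c u); rewrite mix_1_1; reflexivity.
Qed.
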